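(* The set $Q=\{2^k+k;\,k\ge0\}$ is a Kazhdan set in $\mathbb Z$, and there exist irrational numbers $\theta$ such that $\{e^{2i\pi n\theta};\,n\in Q\}$ is not dense in $\mathbb T$. In particular, there is no enumeration $(m_k)_{k\ge1}$ of the elements of $Q$ such that $(e^{2i\pi m_k\theta})_{k\ge1}$ is equidistributed in $\mathbb T$ for every irrational $\theta$.
   Context: A subset $Q$ is a Kazhdan set in $\mathbb Z$ if there exists $\varepsilon>0$ such that every unitary representation $\pi$ of $\mathbb Z$ having a vector $x$ with $\sup_{n\in Q}\|\pi(n)x-x\|<\varepsilon\|x\|$ has a non-zero $\mathbb Z$-invariant vector. Equidistribution in $\mathbb T$ is in the sense of Weyl. *)

From Stdlib Require Import Reals ZArith.
Open Scope R_scope.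

(** A complex Hilbert space is presented as its underlying real vector space
    with the real inner product Re<.,.>, together with the operator J of
    multiplication by the imaginary unit i (so (a+ib)x = a x + b (J x)).
    The complex inner product is <x,y> = inner x y + i inner x (J y) (up to
    convention); the norm is sqrt (inner x x), which is the complex norm. *)
Class CHilbert (H : Type) := {
  hzero : H;
  hadd : H -> H -> H;
  hopp : H -> H;
  hscal : R -> H -> H;
  hJ : H -> H;
  hinner : H -> H -> R;
  hadd_assoc : forall x y z, hadd x (hadd y z) = hadd (hadd x y) z;
  hadd_comm : forall x y, hadd x y = hadd y x;
  hadd_zero : forall x, hadd x hzero = x;
  hadd_opp : forall x, hadd x (hopp x) = hzero;
  hscal_assoc : forall a b x, hscal a (hscal b x) = hscal (a * b) x;
  hscal_one : forall x, hscal 1 x = x;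
  hscal_distr_l : forall a x y, hscal a (hadd x y) = hadd (hscal a x) (hscal a y);
  hscal_distr_r : forall a b x, hscal (a + b) x = hadd (hscal a x) (hscal b x);
  hinner_sym : forall x y, hinner x y = hinner y x;
  hinner_add : forall x y z, hinner (hadd x y) z = hinner x z + hinner y z;
  hinner_scal : forall a x y, hinner (hscal a x) y = a * hinner x y;
  hinner_pos : forall x, 0 <= hinner x x;
  hinner_def : forall x, hinner x x = 0 -> x = hzero;
  hJ_add : forall x y, hJ (hadd x y) = hadd (hJ x) (hJ y);
  hJ_scal : forall a x, hJ (hscal a x) = hscal a (hJ x);
  hJ_J : forall x, hJ (hJ x) = hopp x;
  hJ_inner : forall x y, hinner (hJ x) (hJ y) = hinner x y;
  hcomplete : forall u : nat -> H,
    (forall e, 0 < e -> exists N, forall p q, (N <= p)%nat -> (N <= q)%nat ->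
        sqrt (hinner (hadd (u p) (hopp (u q))) (hadd (u p) (hopp (u q)))) < e) ->
    exists l, forall e, 0 < e -> exists N, forall n, (N <= n)%nat ->
        sqrt (hinner (hadd (u n) (hopp l)) (hadd (u n) (hopp l))) < e
}.

Definition hnorm {H} `{CHilbert H} (x : H) : R := sqrt (hinner x x).
Definition hsub {H} `{CHilbert H} (x y : H) : H := hadd x (hopp y).

(** Continuity is automatic since Z is discrete. *)
Definition unitary_rep {H} `{CHilbert H} (pi : Z -> H -> H) : Prop :=
  (forall x, pi 0%Z x = x) /\
  (forall m n x, pi (m + n)%Z x = pi m (pi n x)) /\
  (forall n x y, pi n (hadd x y) = hadd (pi n x) (pi n y)) /\
  (forall n a x, pi n (hscal a x) = hscal a (pi n x)) /\
  (forall n x, pi n (hJ x) = hJ (pi n x)) /\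
  (forall n x y, hinner (pi n x) (pi n y) = hinner x y).

(** Kazhdan set in Z.  "sup_{n in Q} ||pi(n)x - x|| < eps ||x||" is written
    as: there is delta < eps ||x|| bounding all ||pi(n)x - x||, n in Q. *)
Definition Kazhdan_set (Q : Z -> Prop) : Prop :=
  exists eps, 0 < eps /\
    forall (H : Type) (HS : CHilbert H) (pi : Z -> H -> H),
      unitary_rep pi ->
      (exists x : H, exists delta, delta < eps * hnorm x /\
          forall n, Q n -> hnorm (hsub (pi n x) x) <= delta) ->
      exists v : H, v <> hzero /\ forall n, pi n v = v.

Definition Qset (n : Z) : Prop :=
  exists k : nat, n = (2 ^ (Z.of_nat k) + Z.of_nat k)%Z.

Definition irrational (x : R) : Prop :=
  ~ exists p q : Z, q <> 0%Z /\ x = IZR p / IZR q.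

Definition Tdist (a b : R) : R :=
  sqrt ((cos (2 * PI * a) - cos (2 * PI * b)) ^ 2
      + (sin (2 * PI * a) - sin (2 * PI * b)) ^ 2).

Definition dense_in_T (Q : Z -> Prop) (theta : R) : Prop :=
  forall t r, 0 < r -> exists n, Q n /\ Tdist (IZR n * theta) t < r.

Fixpoint count_in (u : nat -> R) (a b : R) (N : nat) : nat :=
  match N with
  | O => O
  | S N' => (count_in u a b N' +
             if Rle_dec a (frac_part (u N')) then
               if Rlt_dec (frac_part (u N')) b then 1 else 0
             else 0)%nat
  end.

(** Weyl equidistribution of (e^{2 i pi u_k})_k in T, i.e. of (u_k) mod 1. *)
Definition equidistributed (u : nat -> R) : Prop :=
  forall a b, 0 <= a -> a <= b -> b <= 1 ->
    Un_cv (fun N => INR (count_in u a b N) / INR N) (b - a).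

Definition enumeration (Q : Z -> Prop) (m : nat -> Z) : Prop :=
  (forall k, Q (m k)) /\
  (forall k l, m k = m l -> k = l) /\
  (forall n, Q n -> exists k, m k = n).

(* Q is Kazhdan: every integer m <= 1 is a - 2b with a, b in Q, so if the
   pi(n), n in Q, move x by at most delta, every pi(m) moves x by at most
   sqrt 10 delta.  For delta < ||x||/3 the coefficients Re<pi(m)x, x> then stay
   above a positive constant c, and the element of minimal norm of the convex,
   pi-invariant set {y | Re<pi(m)y, x> >= c for all m} is a nonzero invariant
   vector.

   The irrational theta is the intersection of nested intervals, each 1/64 of
   the previous one: at each level the next six values of n = 2^k + k must keep
   n theta at distance at least 1/4096 from 1/2 modulo 1, and the fractions
   p/(d+1) must be excluded; this forbids at most 14 short balls, each meeting
   at most 4 of the 64 candidate subintervals.  Then no n theta, n in Q, comes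
   near 1/2 on the circle, so the orbit is not dense and no enumeration of Q is
   equidistributed for this theta. *)

From Stdlib Require Import Reals ZArith Lra Lia List Classical ClassicalEpsilon.
Import ListNotations.
Open Scope R_scope.

(** * The Kazhdan property of Q *)

Section HilbertAlgebra.
Context {H : Type} `{CHilbert H}.

Lemma hadd_zero_l (x : H) : hadd hzero x = x.
Proof. rewrite hadd_comm; apply hadd_zero. Qed.

Lemma hopp_unique (x y : H) : hadd x y = hzero -> y = hopp x.
Proof.
  intro E.
  rewrite <- (hadd_zero y), <- (hadd_opp x), hadd_assoc, (hadd_comm y x), E.
  apply hadd_zero_l.
Qed.

Lemma hscal_zero (x : H) : hscal 0 x = hzero.
Proof.
  assert (E : hscal 0 x = hadd (hscal 0 x) (hscal 0 x)).
  { rewrite <- hscal_distr_r. f_equal. ring. }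
  rewrite <- (hadd_opp (hscal 0 x)). rewrite E at 2.
  rewrite <- hadd_assoc, hadd_opp, hadd_zero. reflexivity.
Qed.

Lemma hopp_scal (x : H) : hopp x = hscal (-1) x.
Proof.
  symmetry; apply hopp_unique.
  rewrite <- (hscal_one x) at 1. rewrite <- hscal_distr_r.
  replace (1 + -1) with 0 by ring. apply hscal_zero.
Qed.

Lemma hinner_addr (x y z : H) : hinner x (hadd y z) = hinner x y + hinner x z.
Proof. rewrite hinner_sym, hinner_add, (hinner_sym y), (hinner_sym z). reflexivity. Qed.

Lemma hinner_scalr a (x y : H) : hinner x (hscal a y) = a * hinner x y.
Proof. rewrite hinner_sym, hinner_scal, (hinner_sym y). reflexivity. Qed.

Ltac expand_inner := unfold hsub in *; rewrite ?hopp_scal in *;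
  repeat rewrite ?hinner_add, ?hinner_addr, ?hinner_scal, ?hinner_scalr in *.

Lemma hsub_chain (u v w : H) : hadd (hsub u v) (hsub v w) = hsub u w.
Proof.
  unfold hsub. rewrite <- hadd_assoc. f_equal.
  rewrite hadd_assoc, (hadd_comm (hopp v) v), hadd_opp. apply hadd_zero_l.
Qed.

Lemma hsub_eq0 (u v : H) : hsub u v = hzero -> u = v.
Proof.
  unfold hsub; intro E.
  rewrite <- (hadd_zero u), <- (hadd_opp v), (hadd_comm v), hadd_assoc, E.
  apply hadd_zero_l.
Qed.

Lemma hsub_zero (u : H) : hsub u hzero = u.
Proof.
  unfold hsub. rewrite <- (hopp_unique hzero hzero (hadd_zero hzero)). apply hadd_zero.
Qed.

Lemma hinner_sub_sym (a b : H) : hinner (hsub a b) (hsub a b) = hinner (hsub b a) (hsub b a).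
Proof. pose proof (hinner_sym a b). expand_inner. lra. Qed.

Lemma hinner_add_le (a b : H) :
  hinner (hadd a b) (hadd a b) <= 2 * hinner a a + 2 * hinner b b.
Proof. pose proof (hinner_pos (hsub a b)). pose proof (hinner_sym a b). expand_inner. lra. Qed.

Lemma hinner_le_norms (a b : H) : 2 * hinner a b <= hinner a a + hinner b b.
Proof. pose proof (hinner_pos (hsub a b)). pose proof (hinner_sym a b). expand_inner. lra. Qed.

Definition hmid (a b : H) : H := hscal (/ 2) (hadd a b).

Lemma parallelogram (a b : H) :
  hinner (hsub a b) (hsub a b)
  = 2 * hinner a a + 2 * hinner b b - 4 * hinner (hmid a b) (hmid a b).
Proof. unfold hmid. pose proof (hinner_sym a b). expand_inner. field. Qed.

End HilbertAlgebra.

Lemma inv_succ_small e : 0 < e -> exists N, forall n, (N <= n)%nat -> / (INR n + 1) < e.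
Proof.
  intro He. destruct (archimed_cor1 e He) as [N [HN HN0]]. exists N. intros n Hn.
  apply Rle_lt_trans with (/ INR N); auto.
  apply Rinv_le_contravar; [apply lt_0_INR; lia|]. apply le_INR in Hn. lra.
Qed.

Lemma sqrt_lt_iff a e : 0 <= a -> 0 < e -> sqrt a < e <-> a < e * e.
Proof.
  intros Ha He. rewrite <- (sqrt_square e) at 1 by lra. split.
  - apply sqrt_lt_0_alt.
  - intro Hlt. apply sqrt_lt_1_alt. lra.
Qed.

Section MinimalNorm.
Context {H : Type} `{CHilbert H}.
Variable C : H -> Prop.
Hypothesis C_mid : forall a b, C a -> C b -> C (hmid a b).
Hypothesis C_nonempty : exists y, C y.

Lemma exists_inf_norm : exists d2, (forall y, C y -> d2 <= hinner y y) /\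
  forall e, 0 < e -> exists y, C y /\ hinner y y < d2 + e.
Proof.
  set (E := fun r => exists y, C y /\ r = - hinner y y).
  destruct (completeness E) as [s [Hub Hlub]].
  - exists 0. intros r (y & _ & ->). pose proof (hinner_pos y). lra.
  - destruct C_nonempty as [y Hy]. exists (- hinner y y), y. auto.
  - exists (- s). split.
    + intros y Hy. enough (- hinner y y <= s) by lra. apply Hub. exists y. auto.
    + intros e He. apply NNPP. intro Hno.
      enough (s <= s - e) by lra. apply Hlub. intros r (y & Hy & ->).
      destruct (Rlt_le_dec (hinner y y) (- s + e)); [|lra].
      exfalso. apply Hno. exists y. auto.
Qed.

Lemma almost_minimizers_close d2 a b e :
  (forall y, C y -> d2 <= hinner y y) -> C a -> C b ->
  hinner a a <= d2 + e -> hinner b b <= d2 + e ->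
  hinner (hsub a b) (hsub a b) <= 4 * e.
Proof.
  intros Hinf Ha Hb Hae Hbe. rewrite parallelogram.
  pose proof (Hinf _ (C_mid _ _ Ha Hb)). lra.
Qed.

Lemma hcomplete_sq (u : nat -> H) :
  (forall e, 0 < e -> exists N, forall p q, (N <= p)%nat -> (N <= q)%nat ->
     hinner (hsub (u p) (u q)) (hsub (u p) (u q)) < e) ->
  exists l, forall e, 0 < e -> exists N, forall n, (N <= n)%nat ->
     hinner (hsub (u n) l) (hsub (u n) l) < e.
Proof.
  intro Hcau. destruct (hcomplete u) as [l Hl].
  - intros e He. destruct (Hcau (e * e)) as [N HN]; [nra|].
    exists N. intros p q Hp Hq. apply sqrt_lt_iff; [apply hinner_pos | exact He | apply HN; auto].
  - exists l. intros e He. destruct (Hl (sqrt e)) as [N HN]; [apply sqrt_lt_R0; lra|].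
    exists N. intros n Hn. rewrite <- (sqrt_sqrt e) by lra.
    apply sqrt_lt_iff; [apply hinner_pos | apply sqrt_lt_R0; lra | apply HN; lia].
Qed.

Lemma exists_minimizing_limit : exists d2 z, (forall y, C y -> d2 <= hinner y y) /\
  forall e, 0 < e -> exists y, C y /\ hinner y y < d2 + e /\ hinner (hsub y z) (hsub y z) < e.
Proof.
  destruct exists_inf_norm as [d2 [Hinf Happ]].
  assert (Hseq : forall n : nat, exists y, C y /\ hinner y y < d2 + / (INR n + 1)).
  { intro n. apply Happ, Rinv_0_lt_compat. pose proof (pos_INR n). lra. }
  set (ys n := proj1_sig (constructive_indefinite_description _ (Hseq n))).
  assert (Hys : forall n, C (ys n) /\ hinner (ys n) (ys n) < d2 + / (INR n + 1))
    by (intro n; exact (proj2_sig (constructive_indefinite_description _ (Hseq n)))).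
  destruct (hcomplete_sq ys) as [z Hz].
  - intros e He. destruct (inv_succ_small (e / 16)) as [N HN]; [lra|].
    exists N. intros p q Hp Hq.
    destruct (Hys p) as [Cp Np], (Hys q) as [Cq Nq].
    pose proof (HN p Hp). pose proof (HN q Hq).
    apply Rle_lt_trans with (4 * (e / 16 + e / 16)); [|lra].
    apply (almost_minimizers_close d2); auto; lra.
  - exists d2, z. split; auto. intros e He.
    destruct (Hz e He) as [N1 HN1]. destruct (inv_succ_small e He) as [N2 HN2].
    set (n := Nat.max N1 N2). destruct (Hys n) as [Cn Nn].
    exists (ys n). repeat split; auto.
    + pose proof (HN2 n (Nat.le_max_r N1 N2)). lra.
    + apply HN1, Nat.le_max_l.
Qed.

End MinimalNorm.

Section UnitaryRepresentation.
Context {H : Type} `{CHilbert H}.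
Variable pi : Z -> H -> H.
Hypothesis pi_unitary : unitary_rep pi.

Lemma rep_zero x : pi 0%Z x = x.
Proof. apply pi_unitary. Qed.

Lemma rep_add m n x : pi (m + n)%Z x = pi m (pi n x).
Proof. apply pi_unitary. Qed.

Lemma rep_hadd n x y : pi n (hadd x y) = hadd (pi n x) (pi n y).
Proof. apply pi_unitary. Qed.

Lemma rep_hscal n a x : pi n (hscal a x) = hscal a (pi n x).
Proof. apply pi_unitary. Qed.

Lemma rep_hinner n x y : hinner (pi n x) (pi n y) = hinner x y.
Proof. apply pi_unitary. Qed.

Lemma rep_hsub n x y : pi n (hsub x y) = hsub (pi n x) (pi n y).
Proof. unfold hsub. rewrite rep_hadd, !hopp_scal, rep_hscal. reflexivity. Qed.

Lemma rep_fixed_of_fixed_one z : pi 1%Z z = z -> forall n, pi n z = z.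
Proof.
  intro Hz.
  assert (Hnat : forall k, pi (Z.of_nat k) z = z).
  { induction k as [|k IH]; [apply rep_zero|].
    rewrite Nat2Z.inj_succ, <- Z.add_1_l, rep_add, IH. exact Hz. }
  intro n. destruct (Z_le_gt_dec 0 n) as [Hn|Hn].
  - rewrite <- (Z2Nat.id n Hn). apply Hnat.
  - rewrite <- (Hnat (Z.to_nat (- n))) at 1.
    rewrite <- rep_add, Z2Nat.id by lia. rewrite Z.add_opp_diag_r. apply rep_zero.
Qed.

Definition displacement (m : Z) (x : H) : R :=
  hinner (hsub (pi m x) x) (hsub (pi m x) x).

Lemma displacement_opp m x : displacement (- m) x = displacement m x.
Proof.
  unfold displacement.
  assert (E : hsub (pi (- m) x) x = pi (- m) (hsub x (pi m x))).
  { rewrite rep_hsub, <- rep_add, Z.add_opp_diag_l, rep_zero. reflexivity. }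
  rewrite E, rep_hinner, hinner_sub_sym. reflexivity.
Qed.

Lemma displacement_add m n x :
  displacement (m + n) x <= 2 * displacement m x + 2 * displacement n x.
Proof.
  unfold displacement.
  rewrite rep_add, <- (hsub_chain (pi m (pi n x)) (pi m x) x), <- rep_hsub.
  pose proof (hinner_add_le (pi m (hsub (pi n x) x)) (hsub (pi m x) x)) as Hle.
  rewrite rep_hinner in Hle. lra.
Qed.

Lemma hinner_rep_displacement m x :
  2 * hinner (pi m x) x = 2 * hinner x x - displacement m x.
Proof.
  unfold displacement. pose proof (rep_hinner m x x). pose proof (hinner_sym (pi m x) x).
  unfold hsub. rewrite hopp_scal, !hinner_add, !hinner_addr, !hinner_scal, !hinner_scalr.
  lra.
Qed.

Lemma invariant_vector_of_coefficient_bound x c :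
  0 < c -> (forall m, c <= hinner (pi m x) x) ->
  exists v, v <> hzero /\ forall n, pi n v = v.
Proof.
  intros Hc Hx.
  set (C y := forall m, c <= hinner (pi m y) x).
  assert (C_mid : forall a b, C a -> C b -> C (hmid a b)).
  { intros a b Ha Hb m. unfold hmid.
    rewrite rep_hscal, rep_hadd, hinner_scal, hinner_add.
    specialize (Ha m); specialize (Hb m). lra. }
  assert (C_shift : forall a, C a -> C (pi 1%Z a)).
  { intros a Ha m. rewrite <- rep_add. apply Ha. }
  destruct (exists_minimizing_limit C C_mid (ex_intro _ x Hx)) as (d2 & z & Hinf & Hz).
  exists z. split.
  - intros ->.
    set (t := (hinner x x + 1) / c).
    assert (Ht : 0 < t) by (unfold t; pose proof (hinner_pos x); apply Rdiv_lt_0_compat; lra).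
    destruct (Hz (/ (t * t))) as (y & Cy & _ & Hy); [apply Rinv_0_lt_compat; nra|].
    rewrite hsub_zero in Hy.
    assert (Hty : t * t * hinner y y < 1).
    { apply Rmult_lt_compat_l with (r := t * t) in Hy; [|nra].
      rewrite Rinv_r in Hy; nra. }
    (* [2 (|x|^2 + 1) = 2 t c <= 2 t <y, x> <= t^2 |y|^2 + |x|^2 < 1 + |x|^2]. *)
    pose proof (hinner_le_norms (hscal t y) x) as Hyx.
    rewrite hinner_scal, hinner_scal, hinner_scalr in Hyx.
    specialize (Cy 0%Z). rewrite rep_zero in Cy.
    assert (t * c = hinner x x + 1) by (unfold t; field; lra).
    nra.
  - apply rep_fixed_of_fixed_one, hsub_eq0, hinner_def.
    apply Rle_antisym; [|apply hinner_pos].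
    apply le_epsilon. intros e He.
    destruct (Hz (e / 32)) as (y & Cy & Ny & Hyz); [lra|].
    (* [pi 1 y] is in [C] and as short as [y], so it is close to [y]. *)
    assert (Hshift : hinner (hsub (pi 1%Z y) y) (hsub (pi 1%Z y) y) <= 4 * (e / 32)).
    { apply (almost_minimizers_close C C_mid d2); auto; rewrite ?rep_hinner; lra. }
    assert (Hfar : hinner (hsub (pi 1%Z z) (pi 1%Z y)) (hsub (pi 1%Z z) (pi 1%Z y))
                   = hinner (hsub y z) (hsub y z))
      by (rewrite <- rep_hsub, rep_hinner, hinner_sub_sym; reflexivity).
    rewrite <- (hsub_chain (pi 1%Z z) y z), <- (hsub_chain (pi 1%Z z) (pi 1%Z y) y).
    pose proof (hinner_add_le (hadd (hsub (pi 1%Z z) (pi 1%Z y)) (hsub (pi 1%Z y) y)) (hsub y z)).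
    pose proof (hinner_add_le (hsub (pi 1%Z z) (pi 1%Z y)) (hsub (pi 1%Z y) y)).
    lra.
Qed.

End UnitaryRepresentation.

Lemma Qset_elem k : Qset (2 ^ Z.of_nat k + Z.of_nat k)%Z.
Proof. exists k; reflexivity. Qed.

(* [(2^(k+1) + k + 1) - 2 (2^k + k) = 1 - k]. *)
Lemma Qset_difference m : (m <= 1)%Z ->
  exists a b, Qset a /\ Qset b /\ m = (a - 2 * b)%Z.
Proof.
  intro Hm. set (k := Z.to_nat (1 - m)).
  exists (2 ^ Z.of_nat (S k) + Z.of_nat (S k))%Z, (2 ^ Z.of_nat k + Z.of_nat k)%Z.
  split; [apply Qset_elem|]. split; [apply Qset_elem|].
  rewrite Nat2Z.inj_succ, Z.pow_succ_r by lia. unfold k. rewrite Z2Nat.id; lia.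
Qed.

Lemma displacement_bound_of_Qset {H : Type} `{CHilbert H} (pi : Z -> H -> H) x s :
  unitary_rep pi -> (forall n, Qset n -> displacement pi n x <= s) ->
  forall m, displacement pi m x <= 10 * s.
Proof.
  intros Hpi HQ.
  assert (Hle1 : forall m, (m <= 1)%Z -> displacement pi m x <= 10 * s).
  { intros m Hm. destruct (Qset_difference m Hm) as (a & b & Ha & Hb & ->).
    replace (a - 2 * b)%Z with (a + - (b + b))%Z by ring.
    pose proof (displacement_add pi Hpi a (- (b + b)) x).
    pose proof (displacement_add pi Hpi b b x).
    rewrite displacement_opp in * by exact Hpi.
    pose proof (HQ a Ha). pose proof (HQ b Hb). lra. }
  intro m. destruct (Z_le_gt_dec m 1); auto.
  rewrite <- (Z.opp_involutive m), displacement_opp by exact Hpi. apply Hle1. lia.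
Qed.

Lemma kazhdan_Qset : Kazhdan_set Qset.
Proof.
  exists (1 / 3). split; [lra|].
  intros H HS pi Hpi [x [delta [Hdelta HQ]]].
  assert (Hsq : forall n, Qset n -> displacement pi n x <= delta * delta).
  { intros n Hn. specialize (HQ n Hn). unfold hnorm in HQ. unfold displacement.
    pose proof (sqrt_sqrt _ (hinner_pos (hsub (pi n x) x))).
    pose proof (sqrt_pos (hinner (hsub (pi n x) x) (hsub (pi n x) x))). nra. }
  assert (Hdelta0 : 0 <= delta).
  { specialize (HQ 1%Z (Qset_elem 0)).
    pose proof (sqrt_pos (hinner (hsub (pi 1%Z x) x) (hsub (pi 1%Z x) x))).
    unfold hnorm in HQ. lra. }
  pose proof (displacement_bound_of_Qset pi x _ Hpi Hsq) as Hall.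
  apply (invariant_vector_of_coefficient_bound pi Hpi x (hinner x x - 5 * (delta * delta))).
  - unfold hnorm in Hdelta. pose proof (sqrt_sqrt _ (hinner_pos x)).
    pose proof (sqrt_pos (hinner x x)). nra.
  - intro m. pose proof (hinner_rep_displacement pi Hpi m x). specialize (Hall m). lra.
Qed.

(** * An irrational angle whose Q-orbit avoids 1/2 *)

Lemma Z_between_up t z n : t < IZR z -> IZR z <= t + IZR n -> (up t <= z < up t + n)%Z.
Proof.
  intros Hlo Hhi. destruct (archimed t) as [Hup1 Hup2]. split.
  - apply Z.lt_pred_le, lt_IZR. rewrite <- Z.sub_1_r, minus_IZR. lra.
  - apply lt_IZR. rewrite plus_IZR. lra.
Qed.

Lemma exists_nat_not_in (s : list nat) N : (length s < N)%nat ->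
  exists a, (a < N)%nat /\ ~ In a s.
Proof.
  intro Hlen. apply NNPP. intro Hno.
  assert (Hincl : incl (seq 0 N) s).
  { intros a Ha. apply in_seq in Ha. apply NNPP. intro Hnot.
    apply Hno. exists a. split; [lia | exact Hnot]. }
  pose proof (NoDup_incl_length (seq_NoDup N 0) Hincl). rewrite length_seq in *. lia.
Qed.

Section AvoidingSubinterval.
Variables (lo w : R).
Hypothesis w_pos : 0 < w.

(* A closed ball [fst e +- snd e] of radius at most [w] meets at most four of the
   cells [lo + a w, lo + (a + 1) w]; these are listed here. *)
Definition blocked_cells (e : R * R) : list nat :=
  map (fun i => Z.to_nat (up ((fst e - snd e - lo) / w - 2) + Z.of_nat i)) (seq 0 4).

Lemma in_blocked_cells e a x : snd e <= w ->
  lo + INR a * w <= x <= lo + INR a * w + w -> Rabs (x - fst e) <= snd e ->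
  In a (blocked_cells e).
Proof.
  intros Hr Hx Hd.
  pose proof (Rle_abs (x - fst e)). pose proof (Rle_abs (- (x - fst e))). rewrite Rabs_Ropp in *.
  set (t := (fst e - snd e - lo) / w - 2).
  assert (Ht : fst e - snd e - lo = (t + 2) * w) by (unfold t; field; lra).
  assert (Hb : (up t <= Z.of_nat a < up t + 4)%Z).
  { apply Z_between_up; rewrite <- INR_IZR_INZ; nra. }
  apply in_map_iff. exists (Z.to_nat (Z.of_nat a - up t)). split.
  - fold t. lia.
  - apply in_seq. lia.
Qed.

Lemma exists_avoiding_subinterval N (l : list (R * R)) :
  (forall e, In e l -> snd e <= w) -> (4 * length l < N)%nat ->
  exists a, (a < N)%nat /\ forall e x, In e l ->
    lo + INR a * w <= x <= lo + INR a * w + w -> snd e < Rabs (x - fst e).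
Proof.
  intros Hr Hlen.
  destruct (exists_nat_not_in (flat_map blocked_cells l) N) as [a [Ha Hout]].
  { rewrite length_flat_map.
    rewrite (map_ext _ (fun _ => 4%nat))
      by (intro; unfold blocked_cells; now rewrite length_map, length_seq).
    enough (list_sum (map (fun _ => 4%nat) l) = 4 * length l)%nat by lia.
    clear. induction l as [|e l IH]; simpl; lia. }
  exists a. split; auto. intros e x He Hx. apply Rnot_le_lt. intro Hd.
  apply Hout, in_flat_map. exists e. split; auto. eapply in_blocked_cells; eauto.
Qed.

End AvoidingSubinterval.

Section NestedIntervals.
Variable P : nat -> R -> Prop.
Variable len : nat -> R.
Hypothesis len_nonneg : forall d, 0 <= len d.
Hypothesis refine : forall d lo, P d lo ->
  exists lo', P (S d) lo' /\ lo <= lo' /\ lo' + len (S d) <= lo + len d.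
Variable lo0 : R.
Hypothesis P_lo0 : P 0 lo0.

Lemma refine_total d lo : exists lo', P d lo ->
  P (S d) lo' /\ lo <= lo' /\ lo' + len (S d) <= lo + len d.
Proof.
  destruct (classic (P d lo)) as [HP|HP].
  - destruct (refine d lo HP) as [lo' Hlo']. exists lo'. auto.
  - exists lo. tauto.
Qed.

Fixpoint left_end (d : nat) : R :=
  match d with
  | O => lo0
  | S d' => proj1_sig (constructive_indefinite_description _ (refine_total d' (left_end d')))
  end.

Lemma left_end_spec d : P d (left_end d) /\
  left_end d <= left_end (S d) /\ left_end (S d) + len (S d) <= left_end d + len d.
Proof.
  assert (HP : forall n, P n (left_end n)).
  { induction n as [|n IH]; [exact P_lo0|].
    exact (proj1 (proj2_sig (constructive_indefinite_description _
                               (refine_total n (left_end n))) IH)). }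
  split; [apply HP|].
  exact (proj2 (proj2_sig (constructive_indefinite_description _
                             (refine_total d (left_end d))) (HP d))).
Qed.

Lemma left_end_mono d e : (d <= e)%nat ->
  left_end d <= left_end e /\ left_end e + len e <= left_end d + len d.
Proof.
  induction 1 as [|e _ IH]; [lra|].
  destruct (left_end_spec e) as (_ & ? & ?). lra.
Qed.

Lemma left_end_le_right d e : left_end d <= left_end e + len e.
Proof.
  destruct (le_lt_dec d e) as [Hde|Hed].
  - pose proof (left_end_mono d e Hde). pose proof (len_nonneg e). lra.
  - pose proof (left_end_mono e d (Nat.lt_le_incl _ _ Hed)). pose proof (len_nonneg d). lra.
Qed.

Theorem nested_intervals : exists theta, forall d,
  exists lo, P d lo /\ lo <= theta <= lo + len d.
Proof.
  destruct (completeness (fun r => exists d, r = left_end d)) as [theta [Hub Hlub]].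
  - exists (left_end 0 + len 0). intros r [d ->]. apply left_end_le_right.
  - exists lo0, 0%nat. reflexivity.
  - exists theta. intro d. exists (left_end d). split; [apply left_end_spec|]. split.
    + apply Hub. exists d. reflexivity.
    + apply Hlub. intros r [e ->]. apply left_end_le_right.
Qed.

End NestedIntervals.

Definition gap : R := / 4096.
Definition Qterm (k : nat) : R := 2 ^ k + INR k.
Definition avoids_half (y : R) : Prop := forall j : Z, gap <= Rabs (y - IZR j - / 2).

Lemma INR_lt_pow2 n : INR n < 2 ^ n.
Proof.
  induction n as [|n IH]; [simpl; lra|].
  rewrite S_INR. simpl. pose proof (pow_R1_Rle 2 n ltac:(lra)). lra.
Qed.

Lemma Qterm_bounds k : 2 ^ k <= Qterm k < 2 ^ S k.
Proof. unfold Qterm. pose proof (pos_INR k). pose proof (INR_lt_pow2 k). simpl. lra. Qed.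

Lemma pow2_le m n : (m <= n)%nat -> 2 ^ m <= 2 ^ n.
Proof. intro; apply Rle_pow; [lra | assumption]. Qed.

Lemma Rabs_scale_center c x y : 0 < c -> Rabs (c * x - y) = c * Rabs (x - y / c).
Proof.
  intro Hc. replace (c * x - y) with (c * (x - y / c)) by (field; lra).
  rewrite Rabs_mult, Rabs_right by lra. reflexivity.
Qed.

(* Level [d] is a cell of length [2^-(7+6d)]: small enough that [Qterm k] times it
   is below [1] for the six new indices [6d < k <= 6d+6]. *)
Definition cell_len (d : nat) : R := / 2 ^ (7 + 6 * d).

Lemma cell_len_pos d : 0 < cell_len d.
Proof. apply Rinv_0_lt_compat, pow_lt. lra. Qed.

Lemma cell_len_succ d : cell_len d = 64 * cell_len (S d).
Proof.
  unfold cell_len. replace (7 + 6 * S d)%nat with ((7 + 6 * d) + 6)%nat by lia.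
  rewrite (pow_add 2 (7 + 6 * d) 6). pose proof (pow_lt 2 (7 + 6 * d) ltac:(lra)).
  simpl (2 ^ 6). field. lra.
Qed.

Lemma small_times_cell_len r d n : 0 <= r -> r < 2 ^ n -> (n <= 7 + 6 * d)%nat ->
  r * cell_len d < 1.
Proof.
  intros Hr Hrn Hn. unfold cell_len. pose proof (pow2_le _ _ Hn).
  pose proof (pow_lt 2 n ltac:(lra)).
  apply Rmult_lt_reg_r with (2 ^ (7 + 6 * d)); [lra|].
  rewrite Rmult_assoc, Rinv_l by lra. lra.
Qed.

Definition good_cell (d : nat) (lo : R) : Prop :=
  (forall k, (k <= 6 * d)%nat ->
     forall x, lo <= x <= lo + cell_len d -> avoids_half (Qterm k * x)) /\
  (forall p q : Z, (1 <= q <= Z.of_nat d)%Z ->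
     ~ (lo <= IZR p / IZR q <= lo + cell_len d)).

Lemma good_cell0 : good_cell 0 0.
Proof.
  split.
  - intros k Hk x Hx j. replace k with 0%nat by lia.
    unfold Qterm, cell_len, gap in *. simpl in *.
    destruct (Z_le_gt_dec 0 j) as [Hj|Hj].
    + apply IZR_le in Hj. rewrite Rabs_left; lra.
    + assert (IZR j <= -1) by (apply IZR_le; lia). rewrite Rabs_right; lra.
  - intros p q Hq. simpl in Hq. lia.
Qed.

(* The closed balls a refined cell of level [d + 1] must avoid: for each new
   index [k], the two centres [(j + 1/2) / Qterm k] that can come within [gap / Qterm k]
   of the cell, and the two fractions [p / (d + 1)] that can lie in it. *)
Definition half_balls (lo : R) (k : nat) : list (R * R) :=
  let t := Qterm k * lo - / 2 - gap in
  [((IZR (up t) + / 2) / Qterm k, gap / Qterm k);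
   ((IZR (up t + 1) + / 2) / Qterm k, gap / Qterm k)].

Definition rational_balls (d : nat) (lo : R) : list (R * R) :=
  let q := IZR (Z.of_nat (S d)) in
  let t := q * lo - 1 in
  [(IZR (up t) / q, 0); (IZR (up t + 1) / q, 0)].

Definition forbidden_balls (d : nat) (lo : R) : list (R * R) :=
  flat_map (fun i => half_balls lo (6 * d + 1 + i)) (seq 0 6) ++ rational_balls d lo.

Lemma forbidden_balls_length d lo : length (forbidden_balls d lo) = 14%nat.
Proof. reflexivity. Qed.

Lemma half_radius_le d k : (6 * d < k)%nat -> gap / Qterm k <= cell_len (S d).
Proof.
  intro Hk. unfold gap, cell_len. destruct (Qterm_bounds k) as [Hnk _].
  pose proof (pow2_le (1 + 6 * d) k Hk).
  replace (7 + 6 * S d)%nat with (12 + (1 + 6 * d))%nat by lia.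
  rewrite pow_add. unfold Rdiv. rewrite <- Rinv_mult.
  apply Rinv_le_contravar.
  - apply Rmult_lt_0_compat, pow_lt; lra.
  - simpl (2 ^ 12). lra.
Qed.

Lemma forbidden_balls_radius d lo e :
  In e (forbidden_balls d lo) -> snd e <= cell_len (S d).
Proof.
  unfold forbidden_balls. rewrite in_app_iff, in_flat_map.
  pose proof (cell_len_pos (S d)).
  intros [(i & Hi & He) | He].
  - apply in_seq in Hi. unfold half_balls in He. simpl in He.
    destruct He as [<- | [<- | []]]; apply half_radius_le; lia.
  - unfold rational_balls in He. simpl in He. destruct He as [<- | [<- | []]]; simpl; lra.
Qed.

Lemma avoids_half_of_forbidden d lo k x : (k <= 6 * d + 6)%nat ->
  lo <= x <= lo + cell_len d ->
  (forall e, In e (half_balls lo k) -> snd e < Rabs (x - fst e)) ->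
  avoids_half (Qterm k * x).
Proof.
  intros Hk Hx Hav j. apply Rnot_lt_le. intro Hj.
  pose proof (Qterm_bounds k) as [Hnk Hnk'].
  assert (Hpos : 0 < Qterm k) by (pose proof (pow_lt 2 k ltac:(lra)); lra).
  assert (Hshort : Qterm k * cell_len d < 1)
    by (apply (small_times_cell_len _ _ (S k)); [lra | exact Hnk' | lia]).
  set (t := Qterm k * lo - / 2 - gap).
  assert (Hrange : (up t <= j < up t + 2)%Z).
  { apply Rabs_def2 in Hj. unfold gap in *.
    assert (Qterm k * lo <= Qterm k * x <= Qterm k * lo + Qterm k * cell_len d) by nra.
    apply Z_between_up; unfold t, gap; lra. }
  assert (Hball : In ((IZR j + / 2) / Qterm k, gap / Qterm k) (half_balls lo k)).
  { unfold half_balls. fold t. simpl.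
    destruct (Z.eq_dec j (up t)) as [-> | Hne]; [auto|].
    replace j with (up t + 1)%Z by lia. auto. }
  specialize (Hav _ Hball). simpl in Hav.
  replace (Qterm k * x - IZR j - / 2) with (Qterm k * x - (IZR j + / 2)) in Hj by ring.
  rewrite Rabs_scale_center in Hj by exact Hpos.
  apply Rmult_lt_compat_l with (r := Qterm k) in Hav; [|exact Hpos].
  replace (Qterm k * (gap / Qterm k)) with gap in Hav by (field; lra). lra.
Qed.

Lemma not_rational_of_forbidden d lo x p : lo <= x <= lo + cell_len d ->
  (forall e, In e (rational_balls d lo) -> snd e < Rabs (x - fst e)) ->
  x <> IZR p / IZR (Z.of_nat (S d)).
Proof.
  intros Hx Hav Hxp.
  set (q := IZR (Z.of_nat (S d))).
  assert (Hq : 0 < q) by (apply IZR_lt; lia).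
  assert (Hshort : q * cell_len d < 1).
  { apply (small_times_cell_len _ _ (S d)); [lra | | lia].
    unfold q. rewrite <- INR_IZR_INZ. apply INR_lt_pow2. }
  set (t := q * lo - 1).
  assert (Hp : IZR p = q * x) by (rewrite Hxp; unfold q; field; apply not_0_IZR; lia).
  assert (Hrange : (up t <= p < up t + 2)%Z).
  { assert (q * lo <= q * x <= q * lo + q * cell_len d) by nra.
    apply Z_between_up; unfold t; lra. }
  assert (Hball : In (IZR p / q, 0) (rational_balls d lo)).
  { unfold rational_balls. fold q t. simpl.
    destruct (Z.eq_dec p (up t)) as [-> | Hne]; [auto|].
    replace p with (up t + 1)%Z by lia. auto. }
  specialize (Hav _ Hball). simpl in Hav.
  unfold q in Hav. rewrite <- Hxp, Rminus_diag, Rabs_R0 in Hav. lra.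
Qed.

Lemma good_cell_refine d lo : good_cell d lo -> exists lo', good_cell (S d) lo' /\
  lo <= lo' /\ lo' + cell_len (S d) <= lo + cell_len d.
Proof.
  intros [Hk Hq].
  destruct (exists_avoiding_subinterval lo (cell_len (S d)) (cell_len_pos (S d)) 64
              (forbidden_balls d lo)) as [a [Ha Hav]].
  { apply forbidden_balls_radius. }
  { rewrite forbidden_balls_length. lia. }
  set (lo' := lo + INR a * cell_len (S d)) in Hav.
  assert (Hnest : lo <= lo' /\ lo' + cell_len (S d) <= lo + cell_len d).
  { unfold lo'. rewrite (cell_len_succ d). pose proof (cell_len_pos (S d)).
    assert (Ha64 : INR (S a) <= INR 64) by (apply le_INR; lia).
    rewrite S_INR, (INR_IZR_INZ 64) in Ha64. simpl in Ha64.
    pose proof (pos_INR a). nra. }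
  exists lo'. split; [|exact Hnest].
  assert (Hsub : forall x, lo' <= x <= lo' + cell_len (S d) -> lo <= x <= lo + cell_len d)
    by (intros x Hx; lra).
  split.
  - intros k Hk' x Hx. destruct (le_lt_dec k (6 * d)) as [Hold | Hnew].
    + apply Hk; auto.
    + apply (avoids_half_of_forbidden d lo); [lia | auto |].
      intros e He. apply (Hav e x); auto.
      unfold forbidden_balls. apply in_app_iff. left. apply in_flat_map.
      exists (k - 6 * d - 1)%nat. split; [apply in_seq; lia|].
      replace (6 * d + 1 + (k - 6 * d - 1))%nat with k by lia. exact He.
  - intros p q Hq' Hin. destruct (Z.eq_dec q (Z.of_nat (S d))) as [-> | Hne].
    + apply (not_rational_of_forbidden d lo (IZR p / IZR (Z.of_nat (S d))) p); auto.
      intros e He. apply Hav; auto. unfold forbidden_balls. apply in_app_iff. auto.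
    + apply (Hq p q); [lia | apply Hsub; auto].
Qed.

Theorem exists_theta_avoiding_half : exists theta, irrational theta /\
  forall k, avoids_half (Qterm k * theta).
Proof.
  destruct (nested_intervals good_cell cell_len) with (lo0 := 0) as [theta Htheta].
  - intro d. left. apply cell_len_pos.
  - exact good_cell_refine.
  - exact good_cell0.
  - exists theta. split.
    + intros (p & q & Hq & Hpq).
      assert (Hpos : forall p q, (1 <= q)%Z -> theta <> IZR p / IZR q).
      { intros p' q' Hq' Heq. destruct (Htheta (Z.to_nat q')) as (lo & [_ Hrat] & Hin).
        apply (Hrat p' q'); [lia | rewrite <- Heq; exact Hin]. }
      destruct (Z_le_gt_dec 1 q) as [Hq1 | Hq1]; [exact (Hpos p q Hq1 Hpq)|].
      apply (Hpos (- p) (- q))%Z; [lia|].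
      rewrite Hpq, !opp_IZR. field. apply not_0_IZR. exact Hq.
    + intro k. destruct (Htheta k) as (lo & [Hk _] & Hin). apply (Hk k); [lia | exact Hin].
Qed.

(** * Consequences on the circle *)

Lemma IZR_Qset_elem k : IZR (2 ^ Z.of_nat k + Z.of_nat k) = Qterm k.
Proof. unfold Qterm. rewrite plus_IZR, <- pow_IZR, <- INR_IZR_INZ. reflexivity. Qed.

Lemma cos_period_Z x (J : Z) : cos (x + 2 * PI * IZR J) = cos x.
Proof.
  destruct (Z_le_gt_dec 0 J).
  - rewrite <- (Z2Nat.id J), <- INR_IZR_INZ, <- (cos_period x (Z.to_nat J)) by lia.
    f_equal. ring.
  - rewrite <- (cos_period (x + 2 * PI * IZR J) (Z.to_nat (- J))).
    rewrite INR_IZR_INZ, Z2Nat.id, opp_IZR by lia. f_equal. ring.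
Qed.

Lemma Tdist_sq a b : Tdist a b * Tdist a b = 2 - 2 * cos (2 * PI * a - 2 * PI * b).
Proof.
  unfold Tdist. rewrite sqrt_sqrt by (apply Rplus_le_le_0_compat; apply pow2_ge_0).
  rewrite cos_minus.
  pose proof (sin2_cos2 (2 * PI * a)). pose proof (sin2_cos2 (2 * PI * b)).
  unfold Rsqr in *. nra.
Qed.

(* The representative [z] of [y - 1/2] in [[-1/2, 1/2)] has [gap <= |z|]. *)
Lemma cos_le_of_avoids_half y : avoids_half y ->
  cos (2 * PI * y - 2 * PI * (1 / 2)) <= cos (2 * PI * gap).
Proof.
  intro Hy.
  set (J := Int_part y).
  destruct (base_Int_part y) as [B1 B2]. fold J in B1, B2.
  set (z := y - IZR J - / 2).
  specialize (Hy J). fold z in Hy.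
  replace (2 * PI * y - 2 * PI * (1 / 2)) with (2 * PI * z + 2 * PI * IZR J) by (unfold z; field).
  rewrite cos_period_Z.
  assert (E : cos (2 * PI * z) = cos (2 * PI * Rabs z)).
  { destruct (Rle_dec 0 z).
    - rewrite Rabs_right by lra. reflexivity.
    - rewrite Rabs_left, <- cos_neg by lra. f_equal. ring. }
  rewrite E. pose proof PI_RGT_0.
  assert (Rabs z <= 1 / 2) by (apply Rabs_le; unfold z; lra).
  apply cos_decr_1; unfold gap in *; nra.
Qed.

Lemma not_dense_of_avoids_half theta : (forall k, avoids_half (Qterm k * theta)) ->
  ~ dense_in_T Qset theta.
Proof.
  intros Hav Hdense. pose proof PI_RGT_0.
  set (r := sqrt (2 - 2 * cos (2 * PI * gap))).
  assert (Hc : cos (2 * PI * gap) < 1).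
  { rewrite <- cos_0. apply cos_decreasing_1; unfold gap; nra. }
  destruct (Hdense (1 / 2) r) as (n & [k ->] & Hclose); [apply sqrt_lt_R0; lra|].
  rewrite IZR_Qset_elem in Hclose.
  pose proof (cos_le_of_avoids_half _ (Hav k)).
  pose proof (Tdist_sq (Qterm k * theta) (1 / 2)).
  assert (0 <= r) by apply sqrt_pos.
  assert (Hr2 : r * r = 2 - 2 * cos (2 * PI * gap)) by (apply sqrt_sqrt; lra).
  assert (0 <= Tdist (Qterm k * theta) (1 / 2)) by apply sqrt_pos.
  nra.
Qed.

Lemma count_in_zero u a b N :
  (forall k, ~ (a <= frac_part (u k) < b)) -> count_in u a b N = 0%nat.
Proof.
  intro Hout. induction N as [|N IH]; [reflexivity|]. simpl. rewrite IH.
  destruct (Rle_dec a (frac_part (u N))); [|reflexivity].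
  destruct (Rlt_dec (frac_part (u N)) b); [|reflexivity].
  exfalso. apply (Hout N). auto.
Qed.

Lemma not_equidistributed_of_avoids_half theta m :
  (forall k, Qset (m k)) -> (forall k, avoids_half (Qterm k * theta)) ->
  ~ equidistributed (fun k => IZR (m k) * theta).
Proof.
  intros Hm Hav Heq.
  assert (Hrr : 0 < gap < 1) by (unfold gap; lra).
  specialize (Heq (/ 2 - gap / 2) (/ 2 + gap / 2) ltac:(lra) ltac:(lra) ltac:(lra)).
  destruct (Heq (gap / 2)) as [N HN]; [lra|].
  specialize (HN N (Nat.le_refl N)). cbv beta in HN.
  rewrite count_in_zero in HN.
  - unfold R_dist, Rdiv in HN. rewrite Rmult_0_l, Rabs_left in HN; lra.
  - intros k [Hlo Hhi]. destruct (Hm k) as [i Hi]. rewrite Hi in Hlo, Hhi.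
    rewrite IZR_Qset_elem in Hlo, Hhi. unfold frac_part in Hlo, Hhi.
    specialize (Hav i (Int_part (Qterm i * theta))).
    assert (Rabs (Qterm i * theta - IZR (Int_part (Qterm i * theta)) - / 2) < gap)
      by (apply Rabs_def1; lra).
    lra.
Qed.

Theorem mainTheorem9 :
  Kazhdan_set Qset /\
  (exists theta, irrational theta /\ ~ dense_in_T Qset theta) /\
  ~ (exists m : nat -> Z, enumeration Qset m /\
       forall theta, irrational theta ->
         equidistributed (fun k => IZR (m k) * theta)).
Proof.
  destruct exists_theta_avoiding_half as (theta & Hirr & Havoid).
  split; [exact kazhdan_Qset|]. split.
  - exists theta. split; [exact Hirr|]. exact (not_dense_of_avoids_half theta Havoid).
  - intros (m & [Hm _] & Hequi).
    exact (not_equidistributed_of_avoids_half theta m Hm Havoid (Hequi theta Hirr)).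
Qed.
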